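(* Let $m\ge1$ and let $x_0,\dots,x_{m-1}$ be indeterminates. In the ring of $m\times m$ matrices over $\mathbb{Q}(x_0,\dots,x_{m-1})$ (rows and columns indexed by $[0,m-1]$), define $V_x=(x_j^i)_{i,j}$; $E_x=((-1)^{i-j}E_{i-j,[0,i[})_{i,j}$, where $E_{d,[0,i[}$ is the elementary symmetric polynomial of degree $d$ in $x_0,\dots,x_{i-1}$ (with $E_{0,[0,i[}=1$ and $E_{d,[0,i[}=0$ for $d<0$ or $d>i$); $L_x=(L_{i,j})_{i,j}$ with $L_{i,j}=\prod_{k\in[0,j-1]\setminus\{i\}}(x_j-x_k)\big/\prod_{k\in[0,j-1]\setminus\{i\}}(x_i-x_k)$ if $i<j$ and $L_{i,j}=0$ if $i\ge j$; and $Y_x$ the diagonal matrix with $i$th entry $\prod_{k\in[0,i-1]}(x_i-x_k)$. Then \[ E_xV_x(I-L_x)=Y_x, \] where $I$ is the identity matrix.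
   Context: $[a,b]=\{x\in\mathbb{Z}:a\le x\le b\}$. *)

From HB Require Import structures.
From mathcomp Require Import all_boot all_order all_algebra.
From mathcomp Require Import mpoly.
Set Implicit Arguments. Unset Strict Implicit. Unset Printing Implicit Defensive.
Import Order.TTheory GRing.Theory Num.Theory.
Local Open Scope ring_scope.

Definition QX (m : nat) := {fraction {mpoly rat[m]}}.

Definition xv (m : nat) (i : 'I_m) : QX m := FracField.tofrac ('X_i : {mpoly rat[m]}).

(* E_{d,[0,i[} : elementary symmetric polynomial of degree d in x_0,...,x_{i-1}
   (it is 0 when d > i; d = 0 gives 1). *)
Definition Esym (m : nat) (d i : nat) : QX m :=
  \sum_(S : {set 'I_m} | (#|S| == d) && [forall k in S, (k < i)%N])
     \prod_(k in S) xv k.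

Definition Vmx (m : nat) : 'M[QX m]_m := \matrix_(i, j) (xv j) ^+ i.

Definition Emx (m : nat) : 'M[QX m]_m :=
  \matrix_(i, j) (if (j <= i)%N then (-1) ^+ (i - j) * Esym m (i - j) i else 0).

Definition Lmx (m : nat) : 'M[QX m]_m :=
  \matrix_(i, j)
    (if (i < j)%N then
       (\prod_(k < m | (k < j)%N && (k != i)) (xv j - xv k)) /
       (\prod_(k < m | (k < j)%N && (k != i)) (xv i - xv k))
     else 0).

Definition Ymx (m : nat) : 'M[QX m]_m :=
  \matrix_(i, j)
    (if i == j then \prod_(k < m | (k < i)%N) (xv i - xv k) else 0).

From HB Require Import structures.
From mathcomp Require Import all_boot all_order all_algebra.
From mathcomp Require Import mpoly zify.
Set Implicit Arguments.
Unset Strict Implicit.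
Unset Printing Implicit Defensive.
Import GRing.Theory.
Local Open Scope ring_scope.

(* Row i of E_x holds the coefficients of the node polynomial
   P_i(t) = prod_{k<i} (t - x_k) (Vieta's formulas), so (E_x V_x)_{ij} = P_i(x_j),
   and the (i,j) entry of E_x V_x (I - L_x) is P_i(x_j) - sum_{l<j} P_i(x_l) L_{lj}.
   The column L_{.j} holds the Lagrange basis for the nodes x_0, ..., x_{j-1}
   evaluated at x_j.  If i < j, P_i has degree i < j and equals its own
   interpolant, so the entry vanishes; if i >= j, every node x_l (l < j) is a
   root of P_i, so the entry is P_i(x_j), which is Y_i when i = j and 0
   when j < i. *)

Lemma card_ord_lt m j : (j <= m)%N -> #|[pred k : 'I_m | (k < j)%N]| = j.
Proof.
move=> le_jm; rewrite -sum1_card.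
by rewrite -(big_ord_widen_cond m xpredT (fun _ => 1%N) le_jm) /= sum1_card card_ord.
Qed.

Lemma card_set_lt m (S : {set 'I_m}) i :
  (i <= m)%N -> [forall k in S, (k < i)%N] -> (#|S| <= i)%N.
Proof.
move=> le_im /forall_inP S_lt; rewrite -(card_ord_lt le_im).
by apply/subset_leq_card/subsetP => k /S_lt.
Qed.

Lemma size_prod_XsubC_card (R : idomainType) (I : finType) (P : pred I) (x : I -> R) :
  size (\prod_(k | P k) ('X - (x k)%:P)) = #|P|.+1.
Proof.
rewrite size_prod => [|k _]; last by rewrite polyXsubC_eq0.
under eq_bigr do rewrite size_XsubC.
by rewrite sum_nat_const; lia.
Qed.

Section Vieta.

Variables (R : comNzRingType) (I : finType) (P : pred I) (y : I -> R).

Lemma prod_subr_subsets t :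
  \prod_(k | P k) (t - y k) =
  \sum_(S : {set I} | [forall k in S, P k])
     (-1) ^+ #|S| * \prod_(k in S) y k * t ^+ (#|P| - #|S|).
Proof.
have split_factor k : (if P k then t - y k else 1) =
    (if P k then - y k else 0) + (if P k then t else 1).
  by case: (P k); rewrite ?add0r ?addr0 // addrC.
rewrite big_mkcond /= (eq_bigr _ (fun k _ => split_factor k)).
rewrite bigA_distr [RHS]big_mkcond /=; apply: eq_bigr => S _.
rewrite (bigID (mem S)) /=.
case: forall_inP => [S_P | /forall_inP /forall_inPn [k kS /negbTE Pk]]; last first.
  by rewrite (bigD1 k) //= kS Pk mul0r mul0r.
congr (_ * _).
  by rewrite -prodrN; apply: eq_bigr => k kS; rewrite kS S_P.
rewrite (eq_bigr (fun k => if P k then t else 1)) => [|k /negbTE -> //].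
rewrite -big_mkcondr prodr_const; congr (_ ^+ _).
rewrite -(cardID (mem S) P); have -> : #|[predI P & mem S]| = #|S|.
  by apply: eq_card => k; rewrite !inE andbC; case: (boolP (k \in S)) => // /S_P.
by rewrite addKn; apply: eq_card => k; rewrite !inE andbC.
Qed.

End Vieta.

Definition esym_below (R : nzSemiRingType) m (y : 'I_m -> R) (d i : nat) : R :=
  \sum_(S : {set 'I_m} | (#|S| == d) && [forall k in S, (k < i)%N]) \prod_(k in S) y k.

Lemma vieta_below (R : comNzRingType) m (y : 'I_m -> R) (i : 'I_m) (t : R) :
  \sum_(l < m) (if (l <= i)%N then (-1) ^+ (i - l) * esym_below y (i - l) i else 0) * t ^+ l =
  \prod_(k < m | (k < i)%N) (t - y k).
Proof.
have le_im : (i <= m)%N by exact: ltnW.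
rewrite prod_subr_subsets card_ord_lt //.
transitivity (\sum_(l < m) \sum_(S : {set 'I_m} | [forall k in S, (k < i)%N])
  if l == (i - #|S|)%N :> nat then (-1) ^+ #|S| * \prod_(k in S) y k * t ^+ l else 0).
  apply: eq_bigr => l _; case: leqP => [le_li | lt_il]; last first.
    by rewrite mul0r big1 // => S _; case: eqP => // l_eq; move: lt_il; rewrite l_eq; lia.
  rewrite /esym_below big_andbC big_mkcondr big_distrr big_distrl /=.
  apply: eq_bigr => S /(card_set_lt le_im) le_Si.
  have -> : (#|S| == i - l)%N = (l == (i - #|S|)%N :> nat) by apply/eqP/eqP; lia.
  by case: eqP => [->|_]; rewrite ?mulr0 ?mul0r // subKn // mulrA.
rewrite exchange_big; apply: eq_bigr => S /(card_set_lt le_im) le_Si.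
rewrite -big_mkcond (big_ord1_eq _ (fun l => (-1) ^+ #|S| * \prod_(k in S) y k * t ^+ l)).
by rewrite ifT // (leq_ltn_trans (leq_subr _ _) (ltn_ord i)).
Qed.

Section LagrangeInterpolation.

Variables (F : fieldType) (I : finType) (x : I -> F) (P : pred I).
Hypothesis x_inj : injective x.

Definition lagrange_poly (l : I) : {poly F} :=
  (\prod_(k | P k && (k != l)) (x l - x k))^-1 *: \prod_(k | P k && (k != l)) ('X - (x k)%:P).

Lemma horner_lagrange_poly l t :
  (lagrange_poly l).[t] =
  \prod_(k | P k && (k != l)) (t - x k) / \prod_(k | P k && (k != l)) (x l - x k).
Proof.
rewrite hornerZ horner_prod mulrC; congr (_ * _).
by apply: eq_bigr => k _; rewrite hornerXsubC.
Qed.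

Lemma lagrange_poly_node l k : P k -> (lagrange_poly l).[x k] = (k == l)%:R.
Proof.
move=> Pk; rewrite horner_lagrange_poly; case: eqVneq => [->|neq_kl].
  apply: divff; apply/prodf_neq0 => k' /andP[_ neq_k'l].
  by rewrite subr_eq0 (inj_eq x_inj) eq_sym.
by rewrite (bigD1 k) /= ?Pk // subrr !mul0r.
Qed.

Lemma size_lagrange_poly l : P l -> (size (lagrange_poly l) <= #|P|)%N.
Proof.
move=> Pl; apply: leq_trans (size_scale_leq _ _) _.
rewrite size_prod_XsubC_card (cardD1 l P) unfold_in Pl add1n ltnS.
by apply/eq_leq/eq_card => k; rewrite !inE andbC.
Qed.

Lemma lagrange_interpolation (p : {poly F}) :
  (size p <= #|P|)%N -> p = \sum_(l | P l) p.[x l] *: lagrange_poly l.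
Proof.
move=> size_p; apply/subr0_eq; set q := p - _.
apply: (@roots_geq_poly_eq0 _ q [seq x l | l in P]).
- apply/allP => _ /imageP[k Pk ->]; rewrite /root /q hornerD hornerN horner_sum.
  rewrite (bigD1 k) //= big1 => [|l /andP[_ neq_lk]].
    by rewrite hornerZ lagrange_poly_node // eqxx mulr1 addr0 subrr.
  by rewrite hornerZ lagrange_poly_node // eq_sym (negbTE neq_lk) mulr0.
- by rewrite map_inj_uniq ?enum_uniq.
- rewrite size_map -cardE; apply: leq_trans (size_polyD _ _) _.
  rewrite size_polyN geq_max size_p /=; elim/big_ind: _ => [|r s size_r size_s|l Pl].
  + by rewrite size_poly0.
  + by apply: leq_trans (size_polyD _ _) _; rewrite geq_max size_r.
  + by apply: leq_trans (size_scale_leq _ _) (size_lagrange_poly Pl).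
Qed.

End LagrangeInterpolation.

Lemma xv_inj m : injective (@xv m).
Proof.
move=> i k /eqP; rewrite /xv tofrac_eq => /eqP /(congr1 (fun p : {mpoly rat[m]} => p@_U_(i))).
by rewrite !mcoeffXU eqxx; case: eqVneq => // _ /eqP; rewrite oner_eq0.
Qed.

Definition node_poly m (i : nat) : {poly QX m} := \prod_(k < m | (k < i)%N) ('X - (xv k)%:P).

Lemma horner_node_poly m i t : (node_poly m i).[t] = \prod_(k < m | (k < i)%N) (t - xv k).
Proof. by rewrite horner_prod; apply: eq_bigr => k _; rewrite hornerXsubC. Qed.

Lemma size_node_poly m i : (i <= m)%N -> size (node_poly m i) = i.+1.
Proof. by move=> le_im; rewrite size_prod_XsubC_card card_ord_lt. Qed.

Lemma root_node_poly m i (l : 'I_m) : (l < i)%N -> (node_poly m i).[xv l] = 0.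
Proof. by move=> lt_li; rewrite horner_node_poly (bigD1 l) //= subrr mul0r. Qed.

Lemma mulmx_Emx_Vmx m : Emx m *m Vmx m = \matrix_(i, j) (node_poly m i).[xv j].
Proof.
apply/matrixP => i j; rewrite !mxE horner_node_poly -vieta_below.
by apply: eq_bigr => l _; rewrite !mxE.
Qed.

Theorem proposition1p7 (m : nat) (hm : (1 <= m)%N) :
  Emx m *m Vmx m *m (1%:M - Lmx m) = Ymx m.
Proof.
rewrite mulmx_Emx_Vmx mulmxBr mulmx1; apply/matrixP => i j; rewrite !mxE.
under eq_bigr => l _ do rewrite !mxE (fun_if (fun c => _ * c)) mulr0.
rewrite -big_mkcond /=; case: (ltnP i j) => [lt_ij | le_ji].
  have size_node : (size (node_poly m i) <= #|[pred k : 'I_m | (k < j)%N]|)%N.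
    by rewrite size_node_poly ?card_ord_lt // ltnW.
  rewrite {1}(lagrange_interpolation (@xv_inj m) size_node) horner_sum.
  have -> : (i == j) = false by exact: ltn_eqF.
  apply/eqP; rewrite subr_eq0; apply/eqP/eq_bigr => l _.
  by rewrite hornerZ horner_lagrange_poly.
rewrite big1 => [|l lt_lj]; last by rewrite root_node_poly ?mul0r // (leq_trans lt_lj).
rewrite subr0 horner_node_poly; case: eqVneq => [-> //|neq_ij].
by rewrite -horner_node_poly root_node_poly // ltn_neqAle eq_sym neq_ij.
Qed.
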